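(* Let $G$ be an infinite finitely generated residually finite group, $S$ a finite symmetric generating set, and $(X_n)_{n\ge0}$ the lazy random walk on $\mathrm{Cay}(G,S)$. Then $$\liminf_{n\to\infty}\mathbb{E}[D_G(X_n)]\ge 2+\sum_{k\ge2}\frac{1}{[G:\Lambda_k]}.$$
   Context: For $g\ne e$, $D_G(g)=\min\{[G:N]: N\lhd G\text{ of finite index},\ g\notin N\}$, and $D_G(e)=0$. For $k\ge2$, $\Lambda_k$ is the intersection of all normal subgroups of $G$ of index at most $k$; $\Lambda_0=\Lambda_1=G$. The lazy random walk on $\mathrm{Cay}(G,S)$ is the Markov chain with $X_0=e$ and transition matrix $\frac12 I+\frac12P$, where $P(x,y)=\frac1{|S|}\#\{s\in S:y=xs\}$. *)

(* Abstract (possibly infinite) groups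
   are MathComp's [groupType] from boot/monoid.v. *)
From HB Require Import structures.
From mathcomp Require Import all_boot all_order all_algebra.
From mathcomp Require Import monoid.
From mathcomp Require Import all_classical all_reals all_analysis.
Set Implicit Arguments. Unset Strict Implicit. Unset Printing Implicit Defensive.
Import Order.TTheory GRing.Theory Num.Theory.
Local Open Scope classical_set_scope.

Section GroupDefs.
Variable G : groupType.
Local Open Scope group_scope.

Definition normal_subgroup (N : set G) : Prop :=
  [/\ N 1, (forall x y, N x -> N y -> N (x * y)), (forall x, N x -> N (x^-1))
    & (forall x g, N x -> N (g^-1 * x * g))].

(* [G : N] = m : there are exactly m (right) cosets N r *)
Definition has_index (N : set G) (m : nat) : Prop :=
  exists reps : seq G, [/\ size reps = m,
    (forall g, exists2 r, r \in reps & N (g * r^-1)) &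
    (forall i j, (i < m)%N -> (j < m)%N ->
       N (nth 1 reps i * (nth 1 reps j)^-1) -> i = j)].

Definition finite_index (N : set G) : Prop := exists m, has_index N m.

(* the index [G : N] (only meaningful when N has finite index) *)
Definition gindex (N : set G) : nat := xget 0%N [set m | has_index N m].

Definition Dcand (g : G) (m : nat) : Prop :=
  exists N, [/\ normal_subgroup N, has_index N m & ~ N g].

Definition DG (g : G) : nat :=
  if `[< g = 1 >] then 0%N
  else xget 0%N [set m | Dcand g m /\ (forall m', Dcand g m' -> (m <= m')%N)].

Definition Lambda (k : nat) : set G :=
  if (k <= 1)%N then setT
  else [set x | forall N m, normal_subgroup N -> has_index N m -> (m <= k)%N -> N x].

Definition residually_finite : Prop :=
  forall g : G, g <> 1 -> exists N, [/\ normal_subgroup N, finite_index N & ~ N g].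

(* S (a duplicate-free list, i.e. a finite set) is a symmetric generating set *)
Definition symmetric_gen_set (S : seq G) : Prop :=
  [/\ uniq S, (forall s, s \in S -> s^-1 \in S) &
      (forall g : G, exists w : seq G, all (mem S) w /\ g = foldr mul 1 w)].

Definition walk_pos (S : seq G) (n : nat) (t : n.-tuple (option 'I_(size S))) : G :=
  foldl (fun x (o : option 'I_(size S)) => match o with None => x | Some j => x * nth 1 S j end) 1 t.

End GroupDefs.

Section Walk.
Variable R : realType.
Local Open Scope ring_scope.

Definition lazy_step_prob (G : groupType) (S : seq G) (o : option 'I_(size S)) : R :=
  match o with None => 2^-1 | Some _ => (2 * (size S)%:R)^-1 end.

(* E[D_G(X_n)] for the lazy random walk X on Cay(G,S) started at X_0 = 1 *)
Definition expected_DG (G : groupType) (S : seq G) (n : nat) : R :=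
  \sum_(t : n.-tuple (option 'I_(size S)))
     (\prod_(i < n) @lazy_step_prob G S (tnth t i)) * (DG (walk_pos t))%:R.
End Walk.

From HB Require Import structures.
From mathcomp Require Import all_boot all_order all_algebra.
From mathcomp Require Import monoid.
From mathcomp Require Import all_classical all_reals all_analysis.
From mathcomp Require Import finmap ring lra zify.
Set Implicit Arguments. Unset Strict Implicit. Unset Printing Implicit Defensive.
Import Order.TTheory GRing.Theory Num.Theory numFieldNormedType.Exports.
Local Open Scope classical_set_scope.
Local Open Scope ring_scope.

(* For g <> 1, D_G(g) = d is witnessed by a normal subgroup of index d >= 2
   avoiding g, so g lies in none of the Lambda_k with k >= d; hence
   D_G(g) >= 2 + #{2 <= k < K | g in Lambda_k}, and taking expectations
   E[D_G(X_n)] >= 2 + sum_(2 <= k < K) P(X_n in Lambda_k) - (K + 2) P(X_n = 1).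
   The image of the walk in a finite quotient of G by a right congruence (for
   instance the right cosets of a finite-index subgroup) is a lazy walk whose
   steps are bijections and which is irreducible; a Doeblin contraction of the
   oscillation makes it equidistribute.  Hence P(X_n in Lambda_k) tends to
   1/[G : Lambda_k], and since an infinite residually finite group has
   arbitrarily large finite quotients of this kind, P(X_n = 1) tends to 0. *)

Section LiminfLowerBound.
Variable R : realType.
Implicit Types (u v : nat -> R) (l : R).

Definition liminf_ge u l := forall e, 0 < e -> \forall n \near \oo, l - e <= u n.

Lemma liminf_ge_cst l : liminf_ge (fun=> l) l.
Proof. by move=> e e0; apply: nearW => n; rewrite lerBlDr lerDl ltW. Qed.

Lemma liminf_geD u v a b :
  liminf_ge u a -> liminf_ge v b -> liminf_ge (fun n => u n + v n) (a + b).
Proof.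
move=> ua vb e e0; have e2 : 0 < e / 2 by rewrite divr_gt0.
by apply: filterS2 (ua _ e2) (vb _ e2) => n; lra.
Qed.

Lemma liminf_ge_sum (I : Type) (r : seq I) (P : pred I) (F : I -> nat -> R) (l : I -> R) :
  (forall i, P i -> liminf_ge (F i) (l i)) ->
  liminf_ge (fun n => \sum_(i <- r | P i) F i n) (\sum_(i <- r | P i) l i).
Proof.
move=> Fl; elim: r => [|i r IH].
  by under eq_fun do rewrite big_nil; rewrite big_nil; exact: liminf_ge_cst.
under eq_fun do rewrite big_cons; rewrite big_cons.
by case: ifP => // Pi; apply: liminf_geD => //; apply: Fl.
Qed.

Lemma liminf_ge_le u v l :
  (forall n, u n <= v n) -> liminf_ge u l -> liminf_ge v l.
Proof. by move=> uv ul e /ul; apply: filterS => n /le_trans; apply. Qed.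

Lemma cvg_liminf_ge u l : u n @[n --> \oo] --> l -> liminf_ge u l.
Proof.
move=> /cvgrPdist_le ul e /ul; apply: filterS => n.
by rewrite ler_distlC => /andP[].
Qed.

Lemma liminf_ge_limn_einf u l :
  liminf_ge u l -> (l%:E <= limn_einf (fun n => (u n)%:E))%E.
Proof.
move=> ul; apply/lee_subgt0Pr => e /ul [N _ uN].
rewrite limn_einf_lim; apply: lime_ge; first exact: is_cvg_einfs.
exists N => // n /= Nn; apply: le_ereal_inf_tmp => _ [k /= nk <-].
by rewrite -EFinB lee_fin; apply: uN; apply: leq_trans nk.
Qed.

Lemma nneseries_le_ub (a : nat -> R) c m (L : \bar R) :
  (forall k, 0 <= a k) -> (forall K, ((c + \sum_(m <= k < K) a k)%:E <= L)%E) ->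
  (c%:E + \sum_(m <= k <oo) (a k)%:E <= L)%E.
Proof.
move=> a0 aL; have := aL 0%N; rewrite big_geq // addr0.
case: L aL => [l||] //= aL cl; last by rewrite leey.
rewrite -leeBrDl //; apply: lime_le.
  by apply: is_cvg_nneseries => k _ _; rewrite lee_fin.
by apply: nearW => K /=; rewrite sumEFin -EFinB lee_fin lerBrDl -lee_fin.
Qed.

End LiminfLowerBound.

Lemma fin_extrema (T : finType) (R : realDomainType) (f : T -> R) (x0 : T) :
  exists xm xM, forall x, f xm <= f x <= f xM.
Proof.
have [xm _ fm] := @arg_minP _ _ T x0 predT f isT.
have [xM _ fM] := @arg_maxP _ _ T x0 predT f isT.
by exists xm, xM => x; apply/andP; split; [exact: fm | exact: fM].
Qed.

Section DoeblinContraction.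
Variables (R : realType) (Om : finType) (P : (Om -> R) -> Om -> R).
Hypothesis P_affine : forall a b f, P (fun x => a * f x + b) = (fun x => a * P f x + b).
Hypothesis P_ge0 : forall f, (forall x, 0 <= f x) -> forall x, 0 <= P f x.
Hypothesis P_sum : forall f, \sum_x P f x = \sum_x f x.
Variables (B : nat) (c : R).
Hypothesis c_gt0 : 0 < c.
Hypothesis P_doeblin :
  forall f, (forall x, 0 <= f x) -> forall x y, c * f x <= iter B P f y.

Definition band (d : R) (f : Om -> R) := exists lo, forall x, lo <= f x <= lo + d.

Lemma iter_affine n a b f :
  iter n P (fun x => a * f x + b) = (fun x => a * iter n P f x + b).
Proof. by elim: n => //= n ->; rewrite P_affine. Qed.

Lemma iter_cst n b : iter n P (fun=> b) = (fun=> b).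
Proof.
have cst : (fun=> b) = (fun x : Om => 0 * 0 + b) by apply: funext => x; rewrite mul0r add0r.
by rewrite {1}cst (iter_affine n 0 b (fun=> 0)); apply: funext => x; rewrite mul0r add0r.
Qed.

Lemma iter_sum n f : \sum_x iter n P f x = \sum_x f x.
Proof. by elim: n => //= n <-; rewrite P_sum. Qed.

Lemma band_exists (f : Om -> R) : exists d, band d f.
Proof.
case: (pickP (@predT Om)) => [x0 _|Om0]; last by exists 0, 0 => x; have := Om0 x.
have [xm [xM fmM]] := fin_extrema f x0.
by exists (f xM - f xm), (f xm) => x; rewrite addrC subrK.
Qed.

Lemma P_band d f : band d f -> band d (P f).
Proof.
move=> [lo flo]; exists lo => y.
have lo_f x : 0 <= 1 * f x + - lo by have := flo x; lra.
have f_hi x : 0 <= -1 * f x + (lo + d) by have := flo x; lra.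
by have := P_ge0 lo_f y; have := P_ge0 f_hi y; rewrite !P_affine; lra.
Qed.

Lemma band_iter n d f : band d f -> band d (iter n P f).
Proof. by move=> fd; elim: n => //= n; apply: P_band. Qed.

Lemma doeblin_le1 (x0 : Om) : c <= 1.
Proof.
have := P_doeblin (f := fun=> 1) _ x0 x0.
by rewrite iter_cst mulr1; apply.
Qed.

Lemma band_iterB d f : band d f -> band ((1 - c) * d) (iter B P f).
Proof.
move=> [lo flo].
case: (pickP (@predT Om)) => [x0 _|Om0]; last by exists 0 => x; have := Om0 x.
have [xm [xM fmM]] := fin_extrema f x0.
have c_le1 := doeblin_le1 x0.
have dmM : (1 - c) * (f xM - f xm) <= (1 - c) * d.
  rewrite ler_wpM2l ?subr_ge0 //.
  by have := flo xm; have := flo xM; rewrite /= => /andP[_ ?] /andP[? _]; lra.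
(* Doeblin applied to [f - f xm] at the maximum lifts the minimum by
   [c (f xM - f xm)]; applied to [f xM - f] it keeps the maximum. *)
exists (f xm + c * (f xM - f xm)) => y.
have lower := P_doeblin (f := fun x => 1 * f x + - f xm) _ xM y.
have upper := P_doeblin (f := fun x => -1 * f x + f xM) _ xm y.
rewrite !iter_affine in lower upper.
have f_ge_m x : 0 <= 1 * f x + - f xm by have := fmM x; lra.
have f_le_M x : 0 <= -1 * f x + f xM by have := fmM x; lra.
move: (lower f_ge_m) (upper f_le_M); rewrite !mul1r !mulN1r => {}lower {}upper.
rewrite (addrC (- f xm)) in upper.
apply/andP; split; first lra.
have : 0 <= c * (f xM - f xm) by apply: mulr_ge0; [exact: ltW | have := fmM xM; lra].
have : (1 - c) * (f xM - f xm) = f xM - f xm - c * (f xM - f xm) by rewrite mulrBl mul1r.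
lra.
Qed.

Lemma band_iter_contract k n d f :
  (k * B <= n)%N -> band d f -> band ((1 - c) ^+ k * d) (iter n P f).
Proof.
elim: k n => [|k IH] n kn fd; first by rewrite mul1r; apply: band_iter.
have -> : n = (B + (n - B))%N by lia.
by rewrite iterD exprS -mulrA; apply: band_iterB; apply: IH => //; lia.
Qed.

Lemma band_mean d g y : band d g -> `|g y - (\sum_x g x) / #|Om|%:R| <= d.
Proof.
move=> [lo glo]; have K0 : 0 < #|Om|%:R :> R by rewrite ltr0n; apply/card_gt0P; exists y.
have sum_lo : lo * #|Om|%:R <= \sum_x g x.
  by rewrite mulr_natr -sumr_const; apply: ler_sum => x _; case/andP: (glo x).
have sum_hi : \sum_x g x <= (lo + d) * #|Om|%:R.
  by rewrite mulr_natr -sumr_const; apply: ler_sum => x _; case/andP: (glo x).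
rewrite -ler_pdivlMr // in sum_lo; rewrite -ler_pdivrMr // in sum_hi.
by rewrite distrC ler_distlC; have := glo y; lra.
Qed.

Theorem iter_cvg_mean f y :
  iter n P f y @[n --> \oo] --> (\sum_x f x) / #|Om|%:R.
Proof.
have [d fd] := band_exists f.
have geo : (1 - c) ^+ k * d @[k --> \oo] --> 0.
  rewrite -(mul0r d); apply: cvgMr_tmp; apply: cvg_expr.
  by rewrite ger0_norm ?subr_ge0 ?(doeblin_le1 y) // gtrDl oppr_lt0.
apply/cvgrPdist_le => /= e e0.
have [K _ geoK] := proj1 (cvgrPdist_le _ _) geo e e0.
exists (K * B)%N => // n /= Kn.
rewrite distrC -(iter_sum n); apply: le_trans (band_mean y (band_iter_contract Kn fd)) _.
by apply: le_trans (geoK K (leqnn K)); rewrite sub0r normrN ler_norm.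
Qed.

End DoeblinContraction.

Lemma sum_option (V : nmodType) (I : finType) (F : option I -> V) :
  \sum_(a : option I) F a = F None + \sum_(i : I) F (Some i).
Proof.
rewrite (bigD1 None) //=; congr (_ + _).
rewrite (reindex_omap Some (fun a => a)) /=; last by case.
by apply: eq_bigl => i; rewrite eqxx.
Qed.

Lemma sum_tuple_cons (V : nmodType) (T : finType) n (F : n.+1.-tuple T -> V) :
  \sum_(t : n.+1.-tuple T) F t = \sum_(o : T) \sum_(t : n.-tuple T) F [tuple of o :: t].
Proof.
rewrite pair_big /= (reindex (fun p : T * n.-tuple T => [tuple of p.1 :: p.2])) //=.
exists (fun t => (thead t, [tuple of behead t])).
  by move=> [a t] _ /=; congr (_, _); apply: val_inj.
by move=> t _ /=; rewrite -tuple_eta.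
Qed.

Section LazyWalk.
Variables (R : realType) (G : groupType) (S : seq G).
Local Notation step := (option 'I_(size S)).
Local Notation prob := (@lazy_step_prob R G S).

Definition walk_step (x : G) (o : step) : G :=
  if o is Some j then (x * nth 1 S j)%g else x.

Definition walkE (x : G) n (f : G -> R) : R :=
  \sum_(t : n.-tuple step) (\prod_(i < n) prob (tnth t i)) * f (foldl walk_step x t).

Lemma expected_DGE n : expected_DG R S n = walkE 1%g n (fun g => (DG g)%:R).
Proof. by []. Qed.

Lemma lazy_step_prob_ge0 o : 0 <= prob o.
Proof. by case: o => [j|] /=; rewrite invr_ge0 // mulr_ge0. Qed.

Lemma sum_lazy_step_prob : (0 < size S)%N -> \sum_o prob o = 1.
Proof.
move=> S0; rewrite sum_option /= sumr_const card_ord -mulr_natr.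
by field; rewrite pnatr_eq0 -lt0n.
Qed.

Lemma lazy_step_prob_ge o : (0 < size S)%N -> (2 * (size S)%:R)^-1 <= prob o.
Proof.
case: o => [j|] S0 //=; rewrite invfM ler_piMr ?invr_gt0 // invf_le1 ?ltr0n //.
by rewrite ler1n.
Qed.

Lemma walkE0 x f : walkE x 0 f = f x.
Proof.
rewrite /walkE (big_pred1 [tuple]) => [|t]; last by rewrite [t]tuple0 /= eqxx.
by rewrite big_ord0 mul1r.
Qed.

Lemma walkES x n f :
  walkE x n.+1 f = \sum_o prob o * walkE (walk_step x o) n f.
Proof.
rewrite /walkE sum_tuple_cons; apply: eq_bigr => o _; rewrite mulr_sumr.
apply: eq_bigr => t _; rewrite big_ord_recl -mulrA; congr (_ * (_ * _)).
by apply: eq_bigr => i _; rewrite tnthS.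
Qed.

Lemma walkE_sum x n (I : Type) (r : seq I) (P : pred I) (F : I -> G -> R) :
  walkE x n (fun g => \sum_(i <- r | P i) F i g) = \sum_(i <- r | P i) walkE x n (F i).
Proof. by rewrite /walkE exchange_big; apply: eq_bigr => t _; rewrite mulr_sumr. Qed.

Lemma walkED x n f h : walkE x n (fun g => f g + h g) = walkE x n f + walkE x n h.
Proof. by rewrite /walkE -big_split; apply: eq_bigr => t _; rewrite mulrDr. Qed.

Lemma walkEZ x n a f : walkE x n (fun g => a * f g) = a * walkE x n f.
Proof. by rewrite /walkE mulr_sumr; apply: eq_bigr => t _; rewrite mulrCA. Qed.

Lemma walkE_cst x n a : (0 < size S)%N -> walkE x n (fun=> a) = a.
Proof.
move=> S0; elim: n x => [|n IH] x; first by rewrite walkE0.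
by rewrite walkES; under eq_bigr do rewrite IH; rewrite -mulr_suml sum_lazy_step_prob ?mul1r.
Qed.

Lemma walkE_ge0 x n f : (forall g, 0 <= f g) -> 0 <= walkE x n f.
Proof.
move=> f0; apply: sumr_ge0 => t _; rewrite mulr_ge0 ?f0 //.
by apply: prodr_ge0 => i _; apply: lazy_step_prob_ge0.
Qed.

Lemma ler_walkE x n f h : (forall g, f g <= h g) -> walkE x n f <= walkE x n h.
Proof.
move=> fh; apply: ler_sum => t _; rewrite ler_wpM2l ?fh //.
by apply: prodr_ge0 => i _; apply: lazy_step_prob_ge0.
Qed.

End LazyWalk.

Section StepOperator.
Variables (R : realType) (G : groupType) (S : seq G) (Om : finType).
Variable F : option 'I_(size S) -> Om -> Om.
Hypothesis S0 : (0 < size S)%N.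
Hypothesis F_None : forall y, F None y = y.
Local Notation prob := (@lazy_step_prob R G S).

Definition step_op (f : Om -> R) (y : Om) : R := \sum_a prob a * f (F a y).

Definition step_word (y : Om) (w : seq 'I_(size S)) : Om :=
  foldl (fun y j => F (Some j) y) y w.

Lemma step_op_affine a b f :
  step_op (fun x => a * f x + b) = (fun y => a * step_op f y + b).
Proof.
apply: funext => y; rewrite /step_op.
under eq_bigr do rewrite mulrDr mulrCA.
by rewrite big_split /= -mulr_sumr -mulr_suml sum_lazy_step_prob ?mul1r.
Qed.

Lemma step_op_ge0 f : (forall x, 0 <= f x) -> forall y, 0 <= step_op f y.
Proof. by move=> f0 y; apply: sumr_ge0 => a _; rewrite mulr_ge0 ?lazy_step_prob_ge0. Qed.

Lemma step_op_sum : (forall a, injective (F a)) ->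
  forall f, \sum_y step_op f y = \sum_y f y.
Proof.
move=> F_inj f; rewrite exchange_big /= -[RHS]mul1r -(sum_lazy_step_prob R S0).
rewrite mulr_suml; apply: eq_bigr => a _.
by rewrite -mulr_sumr [in RHS](reindex_inj (F_inj a)).
Qed.

Lemma step_op_ge_term f a y :
  (forall x, 0 <= f x) -> prob a * f (F a y) <= step_op f y.
Proof.
move=> f0; rewrite /step_op (bigD1 a) //= lerDl.
by apply: sumr_ge0 => b _; rewrite mulr_ge0 ?lazy_step_prob_ge0.
Qed.

Lemma iter_step_op_ge_word f n w y : (forall x, 0 <= f x) -> (size w <= n)%N ->
  (2 * (size S)%:R)^-1 ^+ n * f (step_word y w) <= iter n step_op f y.
Proof.
move=> f0; elim: n w y => [|n IH] w y.
  by rewrite leqn0 => /nilP ->; rewrite expr0 mul1r.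
have iter_ge0 x : 0 <= iter n step_op f x.
  by elim: n {IH} x => //= n IHn x; apply: step_op_ge0.
pose a := if w is j :: _ then Some j else None.
move=> wn; rewrite exprS -mulrA /=.
apply: le_trans (step_op_ge_term a y iter_ge0).
apply: ler_pM; rewrite ?mulr_ge0 ?exprn_ge0 ?invr_ge0 ?lazy_step_prob_ge //.
by case: w wn @a => [|j w] wn /=; [rewrite F_None; apply: (IH [::]) | apply: IH].
Qed.

Lemma step_op_doeblin : (forall y z, exists w, step_word y w = z) ->
  exists B, forall f, (forall x, 0 <= f x) ->
    forall z y, (2 * (size S)%:R)^-1 ^+ B * f z <= iter B step_op f y.
Proof.
move=> reach.
have {}reach p : exists w, step_word p.1 w == p.2 by have [w /eqP] := reach p.1 p.2; exists w.
pose w p := xchoose (reach p).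
exists (\max_p size (w p))%N => f f0 z y.
have /eqP /= <- := xchooseP (reach (y, z)).
by apply: iter_step_op_ge_word => //; apply: (leq_bigmax (y, z)).
Qed.

End StepOperator.

Definition right_congruence (G : groupType) (T : Type) (phi : G -> T) :=
  forall g h s : G, phi g = phi h -> phi (g * s)%g = phi (h * s)%g.

Section FiniteQuotient.
Variables (R : realType) (G : groupType) (S : seq G) (Om : finType) (phi : G -> Om).
Hypothesis S_gen : forall g : G, exists w : seq G, all (mem S) w /\ g = foldr mul 1%g w.
Hypothesis S0 : (0 < size S)%N.
Hypothesis phi_congr : right_congruence phi.
Hypothesis phi_surj : forall y, exists g, phi g = y.

Lemma quot_lift_ex y : exists g, phi g == y.
Proof. by have [g <-] := phi_surj y; exists g. Qed.

Definition quot_lift y : G := xchoose (quot_lift_ex y).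

Lemma quot_liftK y : phi (quot_lift y) = y.
Proof. exact/eqP/(xchooseP (quot_lift_ex y)). Qed.

Definition quot_step (a : option 'I_(size S)) (y : Om) : Om :=
  phi (walk_step (quot_lift y) a).

Lemma quot_stepE g a : quot_step a (phi g) = phi (walk_step g a).
Proof.
rewrite /quot_step; case: a => [j|] /=; last exact: quot_liftK.
by apply: phi_congr; apply: quot_liftK.
Qed.

Lemma quot_step_None y : quot_step None y = y.
Proof. exact: quot_liftK. Qed.

Lemma quot_step_inj a : injective (quot_step a).
Proof.
move=> y z; have [g <-] := phi_surj y; have [h <-] := phi_surj z.
rewrite !quot_stepE; case: a => [j|] //= /(phi_congr (nth 1 S j)^-1%g).
by rewrite !mulgK.
Qed.

Lemma quot_reach y z : exists w, step_word quot_step y w = z.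
Proof.
have [g <-] := phi_surj y; have [h <-] := phi_surj z.
rewrite -(mulVKg g h); have [u [uS ->]] := S_gen (g^-1 * h)%g.
elim: u uS g => [|s u IH] /= => [_ g|/andP[sS /IH uw] g]; first by exists [::]; rewrite mulg1.
have [w wu] := uw (g * s)%g; have sS' : (index s S < size S)%N by rewrite index_mem.
exists (Ordinal sS' :: w).
by rewrite /= quot_stepE /= nth_index // wu mulgA.
Qed.

Lemma walkE_quot x n (f : Om -> R) :
  walkE S x n (f \o phi) = iter n (step_op quot_step) f (phi x).
Proof.
elim: n x => [|n IH] x; first by rewrite walkE0.
by rewrite walkES; apply: eq_bigr => a _; rewrite IH quot_stepE.
Qed.

Theorem walkE_quot_cvg x (f : Om -> R) :
  walkE S x n (f \o phi) @[n --> \oo] --> (\sum_y f y) / #|Om|%:R.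
Proof.
have [B doeblin] := step_op_doeblin R S0 quot_step_None quot_reach.
under eq_fun do rewrite walkE_quot.
apply: (iter_cvg_mean (step_op_affine quot_step S0) (step_op_ge0 quot_step)
  (step_op_sum S0 quot_step_inj) _ doeblin).
by rewrite exprn_gt0 // invr_gt0 mulr_gt0 // ltr0n.
Qed.

Corollary walkE_fiber_cvg x z :
  walkE S x n (fun g => (phi g == z)%:R) @[n --> \oo] --> (#|Om|%:R^-1 : R).
Proof.
have := @walkE_quot_cvg x (fun y => (y == z)%:R).
by rewrite (bigD1 z) //= eqxx big1 ?addr0 ?mul1r // => y /negbTE ->.
Qed.

End FiniteQuotient.

Lemma surjective_image (T : Type) (Om : finType) (phi : T -> Om) :
  exists (Om' : finType) (phi' : T -> Om'),
    (forall g h, phi' g = phi' h <-> phi g = phi h) /\ (forall y, exists g, phi' g = y).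
Proof.
pose P y := `[< exists g, phi g = y >].
have PP g : P (phi g) by apply/asboolP; exists g.
exists {y : Om | P y}, (fun g => exist _ (phi g) (PP g)); split.
  by move=> g h; split => [[]|e] //; apply: val_inj.
by move=> [y Py]; have /asboolP [g e] := Py; exists g; apply: val_inj.
Qed.

Section Subgroups.
Variable G : groupType.
Implicit Types (N : set G) (g h : G).

Definition subgroup N :=
  [/\ N 1%g, (forall x y, N x -> N y -> N (x * y)%g) & (forall x, N x -> N x^-1%g)].

Lemma normal_subgroupW N : normal_subgroup N -> subgroup N.
Proof. by case. Qed.

Lemma coset_code N m : subgroup N -> has_index N m ->
  exists c : G -> 'I_m, (forall g h, c g = c h <-> N (g * h^-1)%g) /\
                        (forall i, exists g, c g = i).
Proof.
move=> [N1 NM NV] [reps [sz cov dis]].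
have ex g : exists i : 'I_m, N (g * (nth 1%g reps i)^-1)%g.
  have [r rin Nr] := cov g; have im : (index r reps < m)%N by rewrite -sz index_mem.
  by exists (Ordinal im); rewrite /= nth_index.
pose c g := proj1_sig (cid (ex g)).
have cP g : N (g * (nth 1%g reps (c g))^-1)%g by exact: (proj2_sig (cid (ex g))).
exists c; split => [g h|i].
  split => [e|Ngh].
    by have := NM _ _ (cP g) (NV _ (cP h)); rewrite e invgM invgK -mulgA mulKg.
  apply: val_inj; apply: dis; rewrite ?ltn_ord //.
  have := NM _ _ (NM _ _ (NV _ (cP g)) Ngh) (cP h).
  by rewrite invgM invgK -!mulgA !mulKg.
by exists (nth 1%g reps i); apply: val_inj; apply: esym; apply: dis; rewrite ?ltn_ord.
Qed.

Lemma coset_congr (T : Type) N (c : G -> T) :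
  (forall g h, c g = c h <-> N (g * h^-1)%g) -> right_congruence c.
Proof. by move=> cE g h s /cE Ngh; apply/cE; rewrite invgM mulgA mulgK. Qed.

Lemma has_index_uniq N m m' : subgroup N -> has_index N m -> has_index N m' -> m = m'.
Proof.
move=> sN hm hm'.
suff le_index n n' : has_index N n -> has_index N n' -> (n <= n')%N.
  by apply/eqP; rewrite eqn_leq !le_index.
move=> hn hn'; have [c [cE cS]] := coset_code sN hn; have [c' [cE' _]] := coset_code sN hn'.
pose lift i := proj1_sig (cid (cS i)).
have liftK i : c (lift i) = i by exact: (proj2_sig (cid (cS i))).
have inj : injective (fun i => c' (lift i)) by move=> i j /cE' /cE; rewrite !liftK.
by have := leq_card _ inj; rewrite !card_ord.
Qed.

Lemma gindexE N m : subgroup N -> has_index N m -> gindex N = m.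
Proof.
move=> sN hm; apply: (has_index_uniq sN _ hm).
exact: (xgetPex 0%N (ex_intro _ m hm)).
Qed.

Lemma Lambda_subgroup k : subgroup (Lambda k).
Proof.
rewrite /Lambda; case: ifP => _; first by split.
split=> [N m /normal_subgroupW[]//|x y Lx Ly N m nN hN mk|x Lx N m nN hN mk];
  have [_ NM NV] := normal_subgroupW nN.
- by apply: NM; [apply: (Lx N m) | apply: (Ly N m)].
- by apply: NV; apply: (Lx N m).
Qed.

Lemma Lambda_sub k N m : (1 < k)%N -> normal_subgroup N -> has_index N m -> (m <= k)%N ->
  Lambda k `<=` N.
Proof. by move=> k1 nN hN mk g; rewrite /Lambda ifN -?ltnNge // => /(_ N m nN hN mk). Qed.

Lemma has_index_gt1 N m g : subgroup N -> has_index N m -> ~ N g -> (1 < m)%N.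
Proof.
move=> [_ NM NV] [[|r [|r' reps]] [<- cov _]] Ng //.
  by have [] := cov 1%g.
have [_ /[1!inE]/eqP-> N1r] := cov 1%g; have [_ /[1!inE]/eqP-> Ngr] := cov g.
by exfalso; apply: Ng; have := NM _ _ Ngr (NV _ N1r); rewrite mul1g invgK mulgVK.
Qed.

Lemma gen_seq_size_gt0 (S : seq G) : infinite_set [set: G] ->
  (forall g, exists w : seq G, all (mem S) w /\ g = foldr mul 1%g w) -> (0 < size S)%N.
Proof.
case: S => // Ginf S_gen; exfalso; apply: Ginf.
apply: sub_finite_set (finite_seq [:: 1%g]) => g _ /=.
by have [[|a w] [//= _ ->]] := S_gen g; rewrite inE.
Qed.

Lemma sum_bounded_pred_le (P : nat -> bool) m d K :
  (forall k, (m <= k)%N -> P k -> (k < d)%N) -> (\sum_(m <= k < K) P k <= d - m)%N.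
Proof.
move=> Pd; suff : (\sum_(m <= k < K) P k <= minn K d - m)%N by lia.
elim: K => [|K IH]; first by rewrite big_geq.
have [mK|Km] := leqP m K; last by rewrite big_geq.
rewrite big_nat_recr //=; case PK: (P K); last by lia.
by have := Pd K mK PK; lia.
Qed.

Section ResiduallyFinite.
Hypothesis rf : residually_finite G.

Lemma DG_cand g : g <> 1%g -> Dcand g (DG g).
Proof.
move=> g1; rewrite /DG asboolF //.
suff [d dmin] : exists d, Dcand g d /\ (forall d', Dcand g d' -> (d <= d')%N).
  by case: (@xgetPex _ 0%N [set d | Dcand g d /\ (forall d', Dcand g d' -> (d <= d')%N)]
    (ex_intro _ d dmin)).
have cand : exists m, `[< Dcand g m >].
  by have [N [nN [m hm] Ng]] := rf g1; exists m; apply/asboolP; exists N.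
have [d /asboolP dP dmin] := find_ex_minn cand.
by exists d; split => // d' /asboolP; apply: dmin.
Qed.

Lemma DG_ge_Lambda_count g K : g <> 1%g ->
  (2 + \sum_(2 <= k < K) `[< Lambda k g >] <= DG g)%N.
Proof.
move=> g1; have [N [nN hN Ng]] := DG_cand g1.
have := has_index_gt1 (normal_subgroupW nN) hN Ng.
suff : (\sum_(2 <= k < K) `[< Lambda k g >] <= DG g - 2)%N by lia.
apply: sum_bounded_pred_le => k k2 /asboolP Lk; rewrite ltnNge; apply/negP => dk.
exact: Ng (Lambda_sub k2 nN hN dk Lk).
Qed.

Lemma DG_Lambda_bound g K :
  (2 + \sum_(2 <= k < K) `[< Lambda k g >] <= DG g + (K + 2) * (g == 1%g))%N.
Proof.
have [->|/eqP g1] := eqVneq g 1%g; last by rewrite muln0 addn0 DG_ge_Lambda_count.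
have : (\sum_(2 <= k < K) `[< @Lambda G k 1%g >] <= \sum_(2 <= k < K) 1)%N.
  by apply: leq_sum => k _; apply: leq_b1.
by rewrite sum_nat_const_nat; lia.
Qed.

Lemma separating_code (ps : seq (G * G)) : (forall p, p \in ps -> p.1 <> p.2) ->
  exists (Om : finType) (phi : G -> Om),
    right_congruence phi /\ forall p, p \in ps -> phi p.1 <> phi p.2.
Proof.
elim: ps => [|p ps IH] ps_sep; first by exists unit, (fun=> tt).
have [|Om [phi [phi_congr phi_sep]]] := IH.
  by move=> q qps; apply: ps_sep; rewrite in_cons qps orbT.
have p12 : (p.1 * p.2^-1)%g <> 1%g.
  by move=> /divg1_eq; apply: ps_sep; rewrite in_cons eqxx.
have [N [nN [m hm] Np]] := rf p12.
have [c [cE _]] := coset_code (normal_subgroupW nN) hm.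
exists (Om * 'I_m)%type, (fun g => (phi g, c g)); split.
  by move=> g h s [e1 e2]; congr (_, _); [apply: phi_congr | apply: (coset_congr cE)].
move=> q; rewrite in_cons => /orP[/eqP -> [_ /cE //]|qps [e1 _]].
exact: phi_sep qps e1.
Qed.

Lemma large_finite_quotient : infinite_set [set: G] -> forall k,
  exists (Om : finType) (phi : G -> Om),
    [/\ right_congruence phi, (forall y, exists g, phi g = y) & (k <= #|Om|)%N].
Proof.
move=> Ginf k; have [B _ Bk] := infinite_set_fset k Ginf.
pose ps := [seq p <- [seq (a, b) | a <- enum_fset B, b <- enum_fset B] | p.1 != p.2].
have [|Om [phi [phi_congr phi_sep]]] := @separating_code ps.
  by move=> p; rewrite mem_filter => /andP[/eqP].
have [Om' [phi' [phiE phi_surj]]] := surjective_image phi.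
exists Om', phi'; split => //.
  by move=> g h s /phiE e; apply/phiE; apply: phi_congr.
have phi'_inj : {in enum_fset B &, injective phi'}.
  move=> a b aB bB /phiE eab; apply/eqP; apply: contraT => nab; exfalso.
  by apply: (phi_sep (a, b)) eab; rewrite mem_filter nab; apply: allpairs_f.
have uniq_img : uniq (map phi' (enum_fset B)) by rewrite map_inj_in_uniq ?fset_uniq.
apply: leq_trans Bk _; rewrite -(size_map phi') -(card_uniqP uniq_img).
exact: max_card.
Qed.

End ResiduallyFinite.

End Subgroups.

Section WalkOnResiduallyFinite.
Variables (R : realType) (G : groupType) (S : seq G).
Hypothesis rf : residually_finite G.
Hypothesis S_gen : forall g : G, exists w : seq G, all (mem S) w /\ g = foldr mul 1%g w.
Hypothesis S0 : (0 < size S)%N.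

Lemma return_prob_cvg0 : infinite_set [set: G] ->
  walkE S 1%g n (fun g => (g == 1%g)%:R) @[n --> \oo] --> (0 : R).
Proof.
move=> Ginf; apply/cvgrPdist_le => e e0.
have e2 : 0 < e / 2 by rewrite divr_gt0.
have [Om [phi [phi_congr phi_surj Om_large]]] :=
  large_finite_quotient rf Ginf (Num.truncn (2 / e)).+1.
have Om_inv : #|Om|%:R^-1 <= e / 2 :> R.
  have Om0 : (0 < #|Om|)%N by apply: leq_trans Om_large.
  rewrite invf_ple ?posrE ?divr_gt0 ?ltr0n // invf_div.
  by apply: le_trans (ltW (truncnS_gt _)) _; rewrite ler_nat.
have := walkE_fiber_cvg (R := R) S_gen S0 phi_congr phi_surj 1%g (phi 1%g).
move=> /cvgrPdist_le /(_ _ e2); apply: filterS => n /[!ler_distlC] /andP[_ fiber_le].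
have return_le_fiber : walkE S 1%g n (fun g => (g == 1%g)%:R)
    <= walkE S 1%g n (fun g => (phi g == phi 1%g)%:R) :> R.
  by apply: ler_walkE => g; case: eqP => [->|_]; rewrite ?eqxx ?ler0n.
have return_ge0 : 0 <= walkE S 1%g n (fun g => (g == 1%g)%:R) :> R.
  by apply: walkE_ge0 => g; apply: ler0n.
by apply/andP; split; lra.
Qed.

Lemma Lambda_prob_liminf k :
  liminf_ge (fun n => walkE S 1%g n (fun g => `[< Lambda k g >]%:R : R))
            (gindex (@Lambda G k))%:R^-1.
Proof.
(* Without a finite index, [gindex] is 0 and so is its inverse. *)
have [[m hm]|no_index] := pselect (exists m, has_index (@Lambda G k) m); last first.
  rewrite /gindex xgetPN => [|m hm]; last by apply: no_index; exists m.
  rewrite invr0; apply: liminf_ge_le (liminf_ge_cst 0) => n.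
  by apply: walkE_ge0 => g; apply: ler0n.
have [c [cE c_surj]] := coset_code (Lambda_subgroup G k) hm.
rewrite (gindexE (Lambda_subgroup G k) hm); apply: cvg_liminf_ge.
have -> : (fun g => `[< Lambda k g >]%:R : R) = (fun g => (c g == c 1%g)%:R).
  apply: funext => g; have := cE g 1%g; rewrite invg1 mulg1 => cgE.
  suff -> : `[< Lambda k g >] = (c g == c 1%g) by [].
  by apply/idP/eqP => [/asboolP/cgE|/cgE/asboolP].
have := walkE_fiber_cvg (R := R) S_gen S0 (coset_congr cE) c_surj 1%g (c 1%g).
by rewrite card_ord.
Qed.

Lemma expected_DG_lb K n :
  2 + \sum_(2 <= k < K) walkE S 1%g n (fun g => `[< Lambda k g >]%:R)
    - (K + 2)%:R * walkE S 1%g n (fun g => (g == 1%g)%:R) <= expected_DG R S n.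
Proof.
have pointwise (g : G) : 2 + \sum_(2 <= k < K) (`[< Lambda k g >] : nat)%:R
    <= (DG g)%:R + (K + 2)%:R * (g == 1%g)%:R :> R.
  by have := DG_Lambda_bound rf g K; rewrite -(ler_nat R) natrD natr_sum natrD natrM.
have := ler_walkE S 1%g n pointwise.
by rewrite !walkED walkE_cst // walkE_sum walkEZ -expected_DGE; lra.
Qed.

End WalkOnResiduallyFinite.

Theorem proposition4p1 (R : realType) (G : groupType) (S : seq G) :
  infinite_set [set: G] ->
  residually_finite G ->
  symmetric_gen_set S ->
  ((2%:E + \sum_(2 <= k <oo) ((gindex (@Lambda G k))%:R^-1 : R)%:E)
     <= limn_einf (fun n => (expected_DG R S n)%:E))%E.
Proof.
move=> Ginf rf [_ _ S_gen]; have S0 := gen_seq_size_gt0 Ginf S_gen.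
apply: nneseries_le_ub => [k|K]; first by rewrite invr_ge0 ler0n.
apply: liminf_ge_limn_einf; rewrite -[X in liminf_ge _ X]addr0.
apply: liminf_ge_le (expected_DG_lb R rf S0 K) _.
apply: liminf_geD.
  apply: liminf_geD; first exact: liminf_ge_cst.
  by apply: liminf_ge_sum => k _; apply: Lambda_prob_liminf.
apply: cvg_liminf_ge.
rewrite -[X in _ --> X]oppr0 -[X in _ --> - X](mulr0 (K + 2)%:R).
by apply: cvgN; apply: cvgMl_tmp; apply: return_prob_cvg0.
Qed.
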